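(* Consider the following RSS-based localization setting. A stationary target is at an unknown position $\mathbf{s}=(x,y,0)\in\mathbb{R}^3$. There are $N$ UAVs; UAV $i$ ($1\le i\le N$) takes $M_i\ge1$ measurements, the $j$-th one at position $\mathbf{u}_{i,j}=(x_{i,j},y_{i,j},h_{i,j})$. Let $r_{i,j}=\sqrt{(x-x_{i,j})^2+(y-y_{i,j})^2}$, $d_{i,j}=\sqrt{r_{i,j}^2+h_{i,j}^2}$, and let $\beta_{i,j}$ be the horizontal UAV–target angle, i.e. $(x_{i,j}-x,\,y_{i,j}-y)=r_{i,j}(\cos\beta_{i,j},\sin\beta_{i,j})$, with $\mathbf{g}_{i,j}=(\cos\beta_{i,j},\sin\beta_{i,j})^T$. The $j$-th measurement of UAV $i$ is $R_{i,j}=p_0-10\gamma\log_{10}(d_{i,j})+\eta_{i,j}$ with known $p_0$, $\gamma>0$ and independent noises $\eta_{i,j}\sim\mathcal{N}(0,\sigma_i^2)$, $\sigma_i>0$. The Fisher information matrix for $(x,y)$ is $$\mathbf{F}=\Big(\frac{10\gamma}{\ln 10}\Big)^2\sum_{i=1}^N\sum_{j=1}^{M_i}\sigma_i^{-2}\frac{r_{i,j}^2}{d_{i,j}^4}\mathbf{g}_{i,j}\mathbf{g}_{i,j}^T.$$ A configuration is feasible if $r_{i,j}\ge r_0$, $h_{i,j}\ge h_0$ for all $i,j$, and $\|\mathbf{u}_{i,j}-\mathbf{u}_{i,j-1}\|\le t_0c_{\max}$ for $2\le j\le M_i$, where $r_0,h_0,t_0,c_{\max}>0$ are given. Problem P is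 to maximize $\det\mathbf{F}$ over feasible configurations. Let $r^*=\max\{r_0,h_0\}$. Suppose $M_i=M$ for all $i$, $t_0Mc_{\max}<2\pi r^*$, and $\max\{\sigma_i^{-2}:1\le i\le N\}\le\frac12\sum_{i=1}^N\sigma_i^{-2}$. Let $\beta_{1,0},\dots,\beta_{N,0}$ be angles satisfying $\sum_{i=1}^N\sigma_i^{-2}\mathbf{g}(\beta_{i,0})\mathbf{g}(\beta_{i,0})^T=\frac12\big(\sum_{i=1}^N\sigma_i^{-2}\big)\mathbf{I}$, where $\mathbf{g}(\beta)=(\cos\beta,\sin\beta)^T$, and let $0\le c<c_{\max}$. Then the configuration with $r_{i,j}=r^*$, $h_{i,j}=h_0$ and $$\beta_{i,j}=\beta_{i,0}+(j-1)\frac{ct_0}{r^*},\qquad 1\le i\le N,\ 1\le j\le M,$$ is an optimal solution of problem P.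
   Context: $\mathbf{I}$ is the $2\times2$ identity matrix. The optimization is over UAV positions for a given target position $\mathbf{s}$. *)

From HB Require Import structures.
From mathcomp Require Import all_boot all_order all_algebra.
From mathcomp Require Import all_classical all_reals all_analysis.
Set Implicit Arguments. Unset Strict Implicit. Unset Printing Implicit Defensive.
Import Order.TTheory GRing.Theory Num.Theory.
Local Open Scope ring_scope.

Section Defs.
Variable R : realType.

(* target s = (x, y, 0) represented by (x, y); UAV position p = ((x_p, y_p), h_p) *)
Definition pos3 := ((R * R) * R)%type.

Definition hdist (s : R * R) (p : pos3) : R :=
  Num.sqrt ((s.1 - p.1.1) ^+ 2 + (s.2 - p.1.2) ^+ 2).

Definition dist3D (s : R * R) (p : pos3) : R :=
  Num.sqrt (hdist s p ^+ 2 + p.2 ^+ 2).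

Definition gang (b : R) : 'cV[R]_2 := \col_(k < 2) [:: cos b; sin b]`_k.

Definition gvec (s : R * R) (p : pos3) : 'cV[R]_2 :=
  (hdist s p)^-1 *: \col_(k < 2) [:: p.1.1 - s.1; p.1.2 - s.2]`_k.

Definition dpos (p q : pos3) : R :=
  Num.sqrt ((p.1.1 - q.1.1) ^+ 2 + (p.1.2 - q.1.2) ^+ 2 + (p.2 - q.2) ^+ 2).

(* Fisher information matrix; u i j is the position of the (j+1)-th measurement
   of UAV i (0-based j < M) *)
Definition FIM (N M : nat) (gamma : R) (sigma : 'I_N -> R) (s : R * R)
    (u : 'I_N -> nat -> pos3) : 'M[R]_2 :=
  ((10 * gamma / ln 10) ^+ 2) *:
    \sum_(i < N) \sum_(j < M)
      ((sigma i) ^-2 * (hdist s (u i j)) ^+ 2 / (dist3D s (u i j)) ^+ 4)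
        *: (gvec s (u i j) *m (gvec s (u i j))^T).

Definition feasible (N M : nat) (r0 h0 t0 cmax : R) (s : R * R)
    (u : 'I_N -> nat -> pos3) : Prop :=
  (forall (i : 'I_N) (j : nat), (j < M)%N -> r0 <= hdist s (u i j) /\ h0 <= (u i j).2)
  /\ (forall (i : 'I_N) (j : nat), (j.+1 < M)%N -> dpos (u i j.+1) (u i j) <= t0 * cmax).

End Defs.

(* The Fisher matrix F is symmetric, so det F <= (tr F / 2)^2, and as every g_{i,j} is a
   unit vector, tr F is (10 gamma / ln 10)^2 times the sum of the weights
   sigma_i^-2 r^2 / d^4.  Each gain r^2 / (r^2 + h^2)^2 is at most its value at
   r = max r0 h0, h = h0, which bounds det F on every feasible configuration.  The
   circular configuration attains the bound: all its gains are maximal, and since the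
   balanced frame sum_i sigma_i^-2 g g^T = (S/2) I is invariant under turning every
   angle by the same amount, its F is a scalar matrix, for which the trace bound is an
   equality.  It is feasible because a chord is shorter than its arc, so consecutive
   positions are at most c t0 < cmax t0 apart. *)

From HB Require Import structures.
From mathcomp Require Import all_boot all_order all_algebra.
From mathcomp Require Import all_classical all_reals all_analysis.
From mathcomp Require Import ring lra.
Import Order.TTheory GRing.Theory Num.Theory.
Local Open Scope ring_scope.

Set Implicit Arguments.
Unset Strict Implicit.
Unset Printing Implicit Defensive.

Section TwoByTwo.
Variable R : realFieldType.

Lemma det_mx2 (A : 'M[R]_2) : \det A = A 0 0 * A 1 1 - A 0 1 * A 1 0.
Proof.
rewrite (expand_det_row _ 0) !big_ord_recl big_ord0 /cofactor !det_mx11 !mxE /=.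
have -> : lift 0 (0 : 'I_1) = 1 :> 'I_2 by apply/val_inj.
have -> : lift (1 : 'I_2) (0 : 'I_1) = 0 :> 'I_2 by apply/val_inj.
by rewrite /= expr0 expr1 mul1r addr0 mulN1r mulrN [A 0 1 * _]mulrC.
Qed.

Lemma mxtrace_mx2 (A : 'M[R]_2) : \tr A = A 0 0 + A 1 1.
Proof. by rewrite /mxtrace big_ord_recr big_ord1; congr (A _ _ + A _ _); apply/val_inj. Qed.

Lemma det_le_sqr_half_mxtrace (A : 'M[R]_2) : A^T = A -> \det A <= (\tr A / 2) ^+ 2.
Proof.
move=> /matrixP /(_ 1 0); rewrite mxE => symA.
rewrite det_mx2 mxtrace_mx2 symA.
have := sqr_ge0 (A 0 0 - A 1 1); have := sqr_ge0 (A 1 0); nra.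
Qed.

End TwoByTwo.

Section FisherGain.
Variable R : realFieldType.
Implicit Types a b q t : R.

Lemma ratio_sqr_le_peak a t : 0 < a -> 0 <= t -> t / (t + a) ^+ 2 <= a / (a + a) ^+ 2.
Proof.
move=> a_gt0 t_ge0.
rewrite ler_pdivrMr; last by rewrite exprn_gt0 //; lra.
rewrite mulrAC ler_pdivlMr; last by rewrite exprn_gt0 //; lra.
have := mulr_ge0 (ltW a_gt0) (sqr_ge0 (t - a)); nra.
Qed.

Lemma ratio_sqr_antitone a q t : 0 < a -> a <= q -> q <= t ->
  t / (t + a) ^+ 2 <= q / (q + a) ^+ 2.
Proof.
move=> a_gt0 aq qt.
rewrite ler_pdivrMr; last by rewrite exprn_gt0 //; lra.
rewrite mulrAC ler_pdivlMr; last by rewrite exprn_gt0 //; lra.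
have qt_a2 : a ^+ 2 <= q * t by rewrite expr2 ler_pM //; lra.
have : 0 <= (t - q) * (q * t - a ^+ 2) by apply: mulr_ge0; lra.
nra.
Qed.

Lemma ratio_sqr_anti_denom a b t : 0 < a -> a <= b -> 0 <= t ->
  t / (t + b) ^+ 2 <= t / (t + a) ^+ 2.
Proof.
move=> a_gt0 ab t_ge0; apply: ler_wpM2l => //.
rewrite lef_pV2 ?posrE ?exprn_gt0 //; try lra.
by rewrite ler_sqr ?nnegrE; lra.
Qed.

Definition fisher_gain (r h : R) := r ^+ 2 / (r ^+ 2 + h ^+ 2) ^+ 2.

(* As a function of [t = r^2] the gain [t / (t + h^2)^2] increases up to [t = h^2] and
   decreases afterwards, whence the optimal radius [max r0 h0]. *)
Lemma fisher_gain_le_max (r h r0 h0 : R) : 0 < r0 -> 0 < h0 -> r0 <= r -> h0 <= h ->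
  fisher_gain r h <= fisher_gain (Num.max r0 h0) h0.
Proof.
move=> r0_gt0 h0_gt0 r0r h0h; rewrite /fisher_gain.
have h0h_sqr : h0 ^+ 2 <= h ^+ 2 by rewrite ler_sqr ?nnegrE; lra.
have h0_sqr_gt0 : 0 < h0 ^+ 2 by rewrite exprn_gt0.
apply: le_trans (ratio_sqr_anti_denom h0_sqr_gt0 h0h_sqr (sqr_ge0 r)) _.
have [r0h0 | h0r0] := lerP r0 h0.
  by apply: ratio_sqr_le_peak => //; exact: sqr_ge0.
by apply: ratio_sqr_antitone => //; rewrite ler_sqr ?nnegrE; lra.
Qed.

End FisherGain.

Section Trigonometry.
Variable R : realType.

Lemma sin_sqr_le_sqr (x : R) : sin x ^+ 2 <= x ^+ 2.
Proof.
wlog x_ge0 : x / 0 <= x.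
  move=> le_nneg; have [/le_nneg //|x_lt0] := leP 0 x.
  by rewrite -sqrrN -sinN -(sqrrN x) le_nneg // oppr_ge0 ltW.
move: x_ge0; rewrite le0r => /orP[/eqP ->|x_gt0]; first by rewrite sin0.
have [|c _] := MVT x_gt0 (fun y _ => is_derive_sin y).
  by apply: derivable_within_continuous => y _; exact: ex_derive.
by rewrite sin0 !subr0 => ->; rewrite exprMn ler_piMl ?sqr_ge0 //.
Qed.

Lemma one_sub_cos_le (x : R) : 1 - cos x <= x ^+ 2 / 2.
Proof.
have -> : x = (x / 2) *+ 2 by rewrite -mulr_natr divfK ?pnatr_eq0.
rewrite cos_mulr2n cos2sin2.
have := sin_sqr_le_sqr (x / 2); move: (x / 2) => y.
have -> : (y *+ 2) ^+ 2 / 2 = y ^+ 2 *+ 2 by rewrite !mulr2n; field.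
rewrite !mulr2n; lra.
Qed.

End Trigonometry.

Section Rotation.
Variable R : realType.

Definition rot2 (t : R) : 'M[R]_2 :=
  \matrix_(i, j) (if i == j then cos t else if (i < j)%N then - sin t else sin t).

Lemma gang_addr (b t : R) : gang (b + t) = rot2 t *m gang b.
Proof.
apply/matrixP => i j; rewrite ord1 !mxE big_ord_recl big_ord1 !mxE.
by case: i => [[|[|//]] ?] /=; rewrite ?cosD ?sinD; ring.
Qed.

Lemma rot2_orthogonal (t : R) : rot2 t *m (rot2 t)^T = 1%:M.
Proof.
apply/matrixP => i j; rewrite !mxE big_ord_recl big_ord1 !mxE.
have := cos2Dsin2 t.
by case: i => [[|[|//]] ?]; case: j => [[|[|//]] ?] /= => unit_circle; nra.
Qed.

Lemma sum_outer_gang_addr n (w b : 'I_n -> R) (t a : R) :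
  \sum_i w i *: (gang (b i) *m (gang (b i))^T) = a%:M ->
  \sum_i w i *: (gang (b i + t) *m (gang (b i + t))^T) = a%:M.
Proof.
move=> frame.
under eq_bigr do rewrite gang_addr trmx_mul mulmxA -(mulmxA (rot2 t))
  scalemxAl scalemxAr.
rewrite -mulmx_suml -mulmx_sumr frame mul_mx_scalar -scalemxAl.
by rewrite rot2_orthogonal scalemx1.
Qed.

End Rotation.

Section Geometry.
Variable R : realType.
Implicit Types (s : R * R) (p : pos3 R) (r b h t : R).

Definition circle_pos s r b h : pos3 R := ((s.1 + r * cos b, s.2 + r * sin b), h).

Lemma hdist_sqr s p : hdist s p ^+ 2 = (s.1 - p.1.1) ^+ 2 + (s.2 - p.1.2) ^+ 2.
Proof. by rewrite sqr_sqrtr // addr_ge0 ?sqr_ge0. Qed.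

Lemma dist3D_sqr s p : dist3D s p ^+ 2 = hdist s p ^+ 2 + p.2 ^+ 2.
Proof. by rewrite sqr_sqrtr // addr_ge0 ?sqr_ge0. Qed.

Lemma mxtrace_outer_gvec s p : 0 < hdist s p -> \tr (gvec s p *m (gvec s p)^T) = 1.
Proof.
move=> hdist_gt0; rewrite mxtrace_mulC trace_mx11 !mxE big_ord_recl big_ord1 !mxE /=.
rewrite -!expr2 !exprMn -mulrDr exprVn -(sqrrN (_ - s.1)) -(sqrrN (_ - s.2)).
by rewrite !opprB -hdist_sqr mulVf // sqrf_eq0 gt_eqF.
Qed.

Lemma hdist_circle s r b h : 0 <= r -> hdist s (circle_pos s r b h) = r.
Proof.
move=> r_ge0; rewrite /hdist /= !opprD !addNKr !sqrrN !exprMn -mulrDr.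
by rewrite cos2Dsin2 mulr1 sqrtr_sqr ger0_norm.
Qed.

Lemma gvec_circle s r b h : 0 < r -> gvec s (circle_pos s r b h) = gang b.
Proof.
move=> r_gt0; apply/matrixP => i j; rewrite ord1 !mxE hdist_circle ?ltW //=.
by case: i => [[|[|//]] ?] /=; rewrite addrAC subrr add0r mulKf ?gt_eqF.
Qed.

Lemma dpos_circle_le s r b t h : 0 <= r -> 0 <= t ->
  dpos (circle_pos s r (b + t) h) (circle_pos s r b h) <= r * t.
Proof.
move=> r_ge0 t_ge0.
have chord : dpos (circle_pos s r (b + t) h) (circle_pos s r b h)
    = Num.sqrt (r ^+ 2 * ((1 - cos t) *+ 2)).
  rewrite /dpos /= subrr expr0n addr0; congr Num.sqrt; rewrite cosD sinD.
  transitivity (r ^+ 2 * ((cos b ^+ 2 + sin b ^+ 2) * (cos t ^+ 2 + sin t ^+ 2)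
    + (cos b ^+ 2 + sin b ^+ 2) * (1 - cos t *+ 2))); first ring.
  by rewrite !cos2Dsin2; ring.
rewrite chord -(ger0_norm (mulr_ge0 r_ge0 t_ge0)) -sqrtr_sqr ler_sqrt ?sqr_ge0 //.
rewrite exprMn ler_wpM2l ?sqr_ge0 // mulr2n.
have := one_sub_cos_le t; lra.
Qed.

End Geometry.

Section Fisher.
Variables (R : realType) (N M : nat) (gamma : R) (sigma : 'I_N -> R) (s : R * R).

Local Notation K := ((10 * gamma / ln 10) ^+ 2).

Lemma trmx_FIM u : (FIM M gamma sigma s u)^T = FIM M gamma sigma s u.
Proof.
rewrite linearZ linear_sum; congr (_ *: _); apply: eq_bigr => i _.
rewrite linear_sum; apply: eq_bigr => j _.
by rewrite linearZ /= trmx_mul trmxK.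
Qed.

Lemma mxtrace_FIM u : (forall i j, (j < M)%N -> 0 < hdist s (u i j)) ->
  \tr (FIM M gamma sigma s u) = K * \sum_(i < N) \sum_(j < M)
      (sigma i) ^-2 * hdist s (u i j) ^+ 2 / dist3D s (u i j) ^+ 4.
Proof.
move=> hdist_gt0; rewrite mxtraceZ raddf_sum; congr (_ * _); apply: eq_bigr => i _.
rewrite raddf_sum; apply: eq_bigr => j _.
by rewrite /= mxtraceZ mxtrace_outer_gvec ?mulr1 // hdist_gt0.
Qed.

Lemma FIM_circle (beta0 : 'I_N -> R) (r h t a : R) :
  \sum_i (sigma i) ^-2 *: (gang (beta0 i) *m (gang (beta0 i))^T) = a%:M -> 0 < r ->
  FIM M gamma sigma s (fun i j => circle_pos s r (beta0 i + j%:R * t) h)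
    = (K * (fisher_gain r h * a) *+ M)%:M.
Proof.
move=> frame r_gt0; set w := fisher_gain r h.
have term i j : let p := circle_pos s r (beta0 i + j%:R * t) h in
    ((sigma i) ^-2 * hdist s p ^+ 2 / dist3D s p ^+ 4) *: (gvec s p *m (gvec s p)^T)
    = w *: ((sigma i) ^-2 *: (gang (beta0 i + j%:R * t) *m (gang (beta0 i + j%:R * t))^T)).
  rewrite /= gvec_circle // scalerA -mulrA (exprM _ 2 2) dist3D_sqr.
  by rewrite hdist_circle ?ltW // mulrC.
rewrite /FIM exchange_big /=.
under eq_bigr => j _ do under eq_bigr => i _ do rewrite term.
under eq_bigr => j _ do rewrite -scaler_sumr (sum_outer_gang_addr (j%:R * t) frame).
by rewrite sumr_const card_ord scale_scalar_mx -raddfMn scale_scalar_mx mulrnAr.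
Qed.

Lemma feasible_circle (beta0 : 'I_N -> R) (r0 h0 t0 cmax r h t : R) :
  0 <= r -> r0 <= r -> h0 <= h -> 0 <= t -> r * t <= t0 * cmax ->
  feasible M r0 h0 t0 cmax s (fun i j => circle_pos s r (beta0 i + j%:R * t) h).
Proof.
move=> r_ge0 r0r h0h t_ge0 step_le; split=> i j _; first by rewrite hdist_circle.
rewrite -natr1 mulrDl mul1r addrA.
exact: le_trans (dpos_circle_le _ _ _ r_ge0 t_ge0) step_le.
Qed.

Lemma mxtrace_FIM_le (u : 'I_N -> nat -> pos3 R) (r0 h0 t0 cmax : R) :
  0 < r0 -> 0 < h0 -> feasible M r0 h0 t0 cmax s u ->
  0 <= \tr (FIM M gamma sigma s u)
    <= K * (fisher_gain (Num.max r0 h0) h0 * \sum_i (sigma i) ^-2) *+ M.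
Proof.
move=> r0_gt0 h0_gt0 [feas _].
have hdist_gt0 i j (jM : (j < M)%N) : 0 < hdist s (u i j).
  exact: lt_le_trans r0_gt0 (feas i j jM).1.
have sigma_ge0 i : 0 <= (sigma i) ^-2 by rewrite invr_ge0 sqr_ge0.
rewrite mxtrace_FIM //; apply/andP; split.
  rewrite mulr_ge0 ?sqr_ge0 //; apply/sumr_ge0 => i _; apply/sumr_ge0 => j _.
  by rewrite -mulrA mulr_ge0 ?divr_ge0 ?exprn_ge0 ?sqrtr_ge0.
rewrite -mulrnAr ler_wpM2l ?sqr_ge0 // mulr_sumr -sumrMnl.
apply: ler_sum => i _; rewrite -[M in _ *+ M]card_ord -sumr_const.
apply: ler_sum => j _; have [r0r h0h] := feas i j (ltn_ord j).
rewrite -mulrA mulrC ler_wpM2r // (exprM _ 2 2) dist3D_sqr.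
by apply: fisher_gain_le_max; rewrite // (le_trans r0r) ?sqrtr_ge0.
Qed.

End Fisher.

Theorem theorem5 (R : realType) (N M : nat) (gamma r0 h0 t0 cmax c : R)
    (sigma beta0 : 'I_N -> R) (s : R * R) :
  0 < gamma -> 0 < r0 -> 0 < h0 -> 0 < t0 -> 0 < cmax -> (0 < M)%N ->
  (forall i, 0 < sigma i) ->
  t0 * M%:R * cmax < 2 * pi * Num.max r0 h0 ->
  (forall i, (sigma i) ^-2 <= 2^-1 * \sum_(k < N) (sigma k) ^-2) ->
  \sum_(i < N) (sigma i) ^-2 *: (gang (beta0 i) *m (gang (beta0 i))^T)
    = (2^-1 * \sum_(k < N) (sigma k) ^-2)%:M ->
  0 <= c -> c < cmax ->
  let rstar := Num.max r0 h0 in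
  let ustar : 'I_N -> nat -> pos3 R := fun i j =>
    let b := beta0 i + j%:R * (c * t0 / rstar) in
    ((s.1 + rstar * cos b, s.2 + rstar * sin b), h0) in
  feasible M r0 h0 t0 cmax s ustar /\
  (forall u : 'I_N -> nat -> pos3 R, feasible M r0 h0 t0 cmax s u ->
     \det (FIM M gamma sigma s u) <= \det (FIM M gamma sigma s ustar)).
Proof.
(* The bound on the largest [sigma_i^-2] is what makes angles [beta0] with a balanced
   frame exist, and the bound on [t0 M cmax] keeps each trajectory within one turn. *)
move=> _ r0_gt0 h0_gt0 t0_gt0 _ _ _ _ _ frame c_ge0 c_lt_cmax rstar ustar.
have rstar_gt0 : 0 < rstar by rewrite /rstar lt_max r0_gt0.
have step_ge0 : 0 <= c * t0 / rstar by rewrite divr_ge0 ?mulr_ge0 // ltW.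
have -> : ustar = fun i j => circle_pos s rstar (beta0 i + j%:R * (c * t0 / rstar)) h0.
  by [].
split.
  apply: feasible_circle => //; first exact: ltW.
    by rewrite /rstar le_max lexx.
  by rewrite mulrC divfK ?gt_eqF // [c * t0]mulrC ler_pM2l // ltW.
move=> u feas_u.
have /andP[trF_ge0 trF_le] := mxtrace_FIM_le gamma sigma r0_gt0 h0_gt0 feas_u.
rewrite (FIM_circle _ _ _ _ _ frame rstar_gt0) det_scalar.
apply: le_trans (det_le_sqr_half_mxtrace (trmx_FIM _ _ _ _ u)) _.
set K := (10 * gamma / ln 10) ^+ 2; set S := \sum_(k < N) _.
have -> : K * (fisher_gain rstar h0 * (2^-1 * S)) *+ M
    = (K * (fisher_gain rstar h0 * S) *+ M) / 2.
  by rewrite mulrnAl; congr (_ *+ _); ring.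
rewrite ler_sqr ?nnegrE ?divr_ge0 ?(le_trans trF_ge0 trF_le) //.
by rewrite ler_pM2r ?invr_gt0.
Qed.
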